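(* Let $\mathcal K$ be a finitely complete 2-category, $\tau:\Omega_\bullet\to\Omega$ a classifying discrete opfibration in $\mathcal K$, and $f:A\to\Omega$ a 1-cell. Let $\tau_f:A_\bullet\to A$ be the pullback of $\tau$ along $f$. Then $\tau_f$ is a classifying discrete opfibration if and only if $f$ is fully faithful.
   Context: A 1-cell $f:A\to B$ in a 2-category $\mathcal K$ is fully faithful if $\mathcal K(X,f):\mathcal K(X,A)\to\mathcal K(X,B)$ is a fully faithful functor for every $X$. A span $(d,E,c)$ from $A$ to $B$ ($d:E\to A$, $c:E\to B$) is a discrete fibration from $A$ to $B$ if for every $X$ the span of categories $\mathcal K(X,A)\leftarrow\mathcal K(X,E)\to\mathcal K(X,B)$ is a discrete fibration: (i) each arrow $u:a\to d(e)$ has a unique lift $\bar u$ with codomain $e$ and $c(\bar u)$ an identity; (ii) each $v:c(e)\to b$ has a unique lift $\bar v$ with domain $e$ and $d(\bar v)$ an identity; (iii) each arrow $h$ equals $\overline{d(h)}\circ\overline{c(h)}$. $\mathrm{DFib}(1,A)$ is the category of discrete fibrations from the terminal object $1$ to $A$ with span maps. $p:E\to B$ is a discrete opfibration if $(!,E,p)$ is a discrete fibration from $1$ to $B$. A discrete opfibration $\tau:\Omega_\bullet\to\Omega$ is classifying if for every $A$ the functor $G_{\tau,A}:\mathcal K(A,\Omega)\to\mathrm{DFib}(1,A)$, sending $g$ to the pullback of $\tau$ along $g$ and a 2-cell $\phi:g\Rightarrow g'$ to the map of pullbacks induced by the unique lifting of $\phi$ through $\tau$, is fully faithful. *)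

Definition castC {H : Type} (C : H -> H -> Type) {f f' g g' : H}
  (p : f = f') (q : g = g') (x : C f g) : C f' g' :=
  match p in _ = f0, q in _ = g0 return C f0 g0 with eq_refl, eq_refl => x end.

(* A (strict) 2-category, presented as a category with hom-categories,
   left/right whiskering (a sesquicategory) satisfying the interchange law. *)
Record TwoCat := {
  Ob : Type;
  Hom : Ob -> Ob -> Type;
  Cell : forall {A B : Ob}, Hom A B -> Hom A B -> Type;
  id1 : forall A : Ob, Hom A A;
  comp : forall {A B C : Ob}, Hom B C -> Hom A B -> Hom A C;
  assoc : forall {A B C D : Ob} (h : Hom C D) (g : Hom B C) (f : Hom A B),
      comp h (comp g f) = comp (comp h g) f;
  idl : forall {A B : Ob} (f : Hom A B), comp (id1 B) f = f;
  idr : forall {A B : Ob} (f : Hom A B), comp f (id1 A) = f;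
  id2 : forall {A B : Ob} (f : Hom A B), Cell f f;
  vcomp : forall {A B : Ob} {f g h : Hom A B}, Cell g h -> Cell f g -> Cell f h;
  vassoc : forall {A B : Ob} {f g h k : Hom A B} (x : Cell h k) (y : Cell g h) (z : Cell f g),
      vcomp x (vcomp y z) = vcomp (vcomp x y) z;
  vidl : forall {A B : Ob} {f g : Hom A B} (x : Cell f g), vcomp (id2 g) x = x;
  vidr : forall {A B : Ob} {f g : Hom A B} (x : Cell f g), vcomp x (id2 f) = x;
  lw : forall {A B C : Ob} (h : Hom B C) {f g : Hom A B}, Cell f g -> Cell (comp h f) (comp h g);
  rw : forall {A B C : Ob} {f g : Hom B C}, Cell f g -> forall k : Hom A B, Cell (comp f k) (comp g k);
  lw_id2 : forall {A B C : Ob} (h : Hom B C) (f : Hom A B), lw h (id2 f) = id2 (comp h f);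
  lw_vcomp : forall {A B C : Ob} (h : Hom B C) {f g g' : Hom A B} (x : Cell g g') (y : Cell f g),
      lw h (vcomp x y) = vcomp (lw h x) (lw h y);
  rw_id2 : forall {A B C : Ob} (f : Hom B C) (k : Hom A B), rw (id2 f) k = id2 (comp f k);
  rw_vcomp : forall {A B C : Ob} {f g g' : Hom B C} (x : Cell g g') (y : Cell f g) (k : Hom A B),
      rw (vcomp x y) k = vcomp (rw x k) (rw y k);
  lw_id1 : forall {A B : Ob} {f g : Hom A B} (x : Cell f g),
      castC (@Cell A B) (idl f) (idl g) (lw (id1 B) x) = x;
  rw_id1 : forall {A B : Ob} {f g : Hom A B} (x : Cell f g),
      castC (@Cell A B) (idr f) (idr g) (rw x (id1 A)) = x;
  lw_comp : forall {A B C D : Ob} (k : Hom C D) (h : Hom B C) {f g : Hom A B} (x : Cell f g),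
      castC (@Cell A D) (assoc k h f) (assoc k h g) (lw k (lw h x)) = lw (comp k h) x;
  rw_comp : forall {A B C D : Ob} {f g : Hom C D} (x : Cell f g) (h : Hom B C) (k : Hom A B),
      castC (@Cell A D) (assoc f h k) (assoc g h k) (rw x (comp h k)) = rw (rw x h) k;
  lw_rw : forall {A B C D : Ob} (h : Hom C D) {f g : Hom B C} (x : Cell f g) (k : Hom A B),
      castC (@Cell A D) (assoc h f k) (assoc h g k) (lw h (rw x k)) = rw (lw h x) k;
  interchange : forall {A B C : Ob} {f g : Hom A B} {h k : Hom B C} (x : Cell f g) (y : Cell h k),
      vcomp (rw y g) (lw h x) = vcomp (lw k x) (rw y f)
}.

Section TwoCatNotions.
Variable K : TwoCat.

Definition ccast {A B : Ob K} {f f' g g' : Hom K A B} (p : f = f') (q : g = g')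
  (x : Cell K f g) : Cell K f' g' := castC (@Cell K A B) p q x.

Definition is_id {X Y : Ob K} {u v : Hom K X Y} (x : Cell K u v) : Prop :=
  exists q : v = u, ccast eq_refl q x = id2 K u.

Definition fully_faithful {A B : Ob K} (f : Hom K A B) : Prop :=
  forall (X : Ob K) (a a' : Hom K X A) (b : Cell K (comp K f a) (comp K f a')),
    exists! x : Cell K a a', lw K f x = b.

(* (d,E,c) is a discrete fibration from A to B: for every X, the span of
   categories K(X,A) <- K(X,E) -> K(X,B) is a discrete fibration (i),(ii),(iii). *)
Definition is_dfib {A B E : Ob K} (d : Hom K E A) (c : Hom K E B) : Prop :=
  forall X : Ob K,
  (forall (e : Hom K X E) (a : Hom K X A) (u : Cell K a (comp K d e)),
     exists! w : {a' : Hom K X E & Cell K a' e},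
       (exists p : comp K d (projT1 w) = a, ccast p eq_refl (lw K d (projT2 w)) = u)
       /\ is_id (lw K c (projT2 w)))
  /\ (forall (e : Hom K X E) (b : Hom K X B) (v : Cell K (comp K c e) b),
     exists! w : {b' : Hom K X E & Cell K e b'},
       (exists p : comp K c (projT1 w) = b, ccast eq_refl p (lw K c (projT2 w)) = v)
       /\ is_id (lw K d (projT2 w)))
  (* (iii) : h = (lift of d(h) with codomain e') o (lift of c(h) with domain e) *)
  /\ (forall (e e' : Hom K X E) (h : Cell K e e'),
     exists (x : Hom K X E) (bt : Cell K e x) (gm : Cell K x e'),
       (exists p : comp K c x = comp K c e', ccast eq_refl p (lw K c bt) = lw K c h)
       /\ is_id (lw K d bt)
       /\ (exists q : comp K d x = comp K d e, ccast q eq_refl (lw K d gm) = lw K d h)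
       /\ is_id (lw K c gm)
       /\ vcomp K gm bt = h).

Record terminal := {
  tob : Ob K;
  bang : forall X : Ob K, Hom K X tob;
  bang_uniq : forall (X : Ob K) (f : Hom K X tob), f = bang X;
  cell_uniq : forall (X : Ob K) (f g : Hom K X tob) (x y : Cell K f g), x = y
}.

Definition is_dopfib (T : terminal) {E B : Ob K} (p : Hom K E B) : Prop :=
  is_dfib (bang T E) p.

Definition sq_eq {A B C P : Ob K} (f : Hom K A C) (g : Hom K B C)
  (p : Hom K P A) (q : Hom K P B) (sq : comp K f p = comp K g q)
  {X : Ob K} (h : Hom K X P) : comp K f (comp K p h) = comp K g (comp K q h) :=
  eq_trans (assoc K f p h)
    (eq_trans (f_equal (fun u => comp K u h) sq) (eq_sym (assoc K g q h))).

(* strict 2-pullback: K(X,P) -> K(X,A) x_{K(X,C)} K(X,B) is an isomorphism of categories *)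
Definition is_pullback {A B C P : Ob K} (f : Hom K A C) (g : Hom K B C)
  (p : Hom K P A) (q : Hom K P B) (sq : comp K f p = comp K g q) : Prop :=
  forall X : Ob K,
  (forall (a : Hom K X A) (b : Hom K X B), comp K f a = comp K g b ->
     exists! h : Hom K X P, comp K p h = a /\ comp K q h = b)
  /\ (forall (h h' : Hom K X P) (x : Cell K (comp K p h) (comp K p h'))
        (y : Cell K (comp K q h) (comp K q h')),
      ccast (sq_eq f g p q sq h) (sq_eq f g p q sq h') (lw K f x) = lw K g y ->
      exists! z : Cell K h h', lw K p z = x /\ lw K q z = y).

(* cotensor of A with the arrow category 2: K(X,A2) ~= [2, K(X,A)] *)
Definition is_cotensor2 {A A2 : Ob K} (s t : Hom K A2 A) (l : Cell K s t) : Prop :=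
  forall X : Ob K,
  (forall (a a' : Hom K X A) (th : Cell K a a'),
     exists! h : Hom K X A2,
       exists (e1 : comp K s h = a) (e2 : comp K t h = a'), ccast e1 e2 (rw K l h) = th)
  /\ (forall (h h' : Hom K X A2) (x : Cell K (comp K s h) (comp K s h'))
        (y : Cell K (comp K t h) (comp K t h')),
      vcomp K y (rw K l h) = vcomp K (rw K l h') x ->
      exists! z : Cell K h h', lw K s z = x /\ lw K t z = y).

(* finite (strict, weighted) 2-limits; by Street's theorem these are generated by
   the terminal object, pullbacks and cotensors with 2. *)
Definition finitely_complete : Prop :=
  inhabited terminal
  /\ (forall (A B C : Ob K) (f : Hom K A C) (g : Hom K B C),
        exists (P : Ob K) (p : Hom K P A) (q : Hom K P B) (sq : comp K f p = comp K g q),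
          is_pullback f g p q sq)
  /\ (forall A : Ob K, exists (A2 : Ob K) (s t : Hom K A2 A) (l : Cell K s t),
          is_cotensor2 s t l).

(* Given pullbacks (P,c,k) of p along g and (P',c',k') of p along g', and
   phi : g => g', m : P -> P' is the map of pullbacks induced by the unique
   lifting of phi through p, i.e. G_{p,A}(phi) = m. *)
Definition induced_map (T : terminal) {E B A : Ob K} (p : Hom K E B)
  {g g' : Hom K A B} {P P' : Ob K}
  (c : Hom K P A) (k : Hom K P E) (sq : comp K g c = comp K p k)
  (c' : Hom K P' A) (k' : Hom K P' E)
  (phi : Cell K g g') (m : Hom K P P') : Prop :=
  comp K c' m = c /\
  exists (k'' : Hom K P E) (vb : Cell K k k'') (e : comp K p k'' = comp K g' c),
    ccast (eq_sym sq) e (lw K p vb) = rw K phi c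
    /\ is_id (lw K (bang T E) vb)
    /\ comp K k' m = k''.

(* p classifying: for every A, G_{p,A} : K(A,B) -> DFib(1,A) is fully faithful,
   i.e. bijective on hom-sets; stated for arbitrary choices of the pullbacks. *)
Definition classifying (T : terminal) {E B : Ob K} (p : Hom K E B) : Prop :=
  forall (A : Ob K) (g g' : Hom K A B)
    (P : Ob K) (c : Hom K P A) (k : Hom K P E) (sq : comp K g c = comp K p k),
    is_pullback g p c k sq ->
  forall (P' : Ob K) (c' : Hom K P' A) (k' : Hom K P' E) (sq' : comp K g' c' = comp K p k'),
    is_pullback g' p c' k' sq' ->
  forall m : Hom K P P',
    comp K (bang T P') m = bang T P -> comp K c' m = c ->
    exists! phi : Cell K g g', induced_map T p c k sq c' k' phi m.

Definition classifying_dopfib (T : terminal) {E B : Ob K} (p : Hom K E B) : Prop :=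
  is_dopfib T p /\ classifying T p.

End TwoCatNotions.

From Stdlib Require Import Eqdep.

(* Pasting pullbacks, the pullback of tau_f along a : X -> A is the pullback of
   tau along f a, and a 2-cell phi : a => a' induces the same map between these
   pullbacks through tau_f as f phi does through tau. Hence
   G_{tau_f,X} = G_{tau,X} o K(X,f). Since G_{tau,X} is fully faithful and every
   2-cell f a => f a' induces some map of pullbacks (lift it through tau),
   G_{tau_f,X} is fully faithful exactly when K(X,f) is. Being a pullback of a
   discrete opfibration, tau_f is always one. *)

Section TwoCategory.
Variable K : TwoCat.

(* Equality of 2-cells whose boundaries are only propositionally equal; it lets
   us reason about the casts [ccast] without transporting along equations. *)
Definition ceq {A B : Ob K} {f g f' g' : Hom K A B} (x : Cell K f g) (y : Cell K f' g') : Prop :=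
  existT (fun fg : Hom K A B * Hom K A B => Cell K (fst fg) (snd fg)) (f, g) x
  = existT (fun fg : Hom K A B * Hom K A B => Cell K (fst fg) (snd fg)) (f', g') y.

Lemma ceq_sym {A B : Ob K} {f g f' g' : Hom K A B} (x : Cell K f g) (y : Cell K f' g') :
  ceq x y -> ceq y x.
Proof. exact (@eq_sym _ _ _). Qed.

Lemma ceq_trans {A B : Ob K} {f g f' g' f'' g'' : Hom K A B}
  (x : Cell K f g) (y : Cell K f' g') (z : Cell K f'' g'') :
  ceq x y -> ceq y z -> ceq x z.
Proof. exact (@eq_trans _ _ _ _). Qed.

Lemma ceq_ends {A B : Ob K} {f g f' g' : Hom K A B} (x : Cell K f g) (y : Cell K f' g') :
  ceq x y -> f = f' /\ g = g'.
Proof. intro H. apply (f_equal (@projT1 _ _)) in H. injection H. auto. Qed.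

Lemma ceq_eq {A B : Ob K} {f g : Hom K A B} (x y : Cell K f g) : ceq x y -> x = y.
Proof. exact (inj_pair2 _ _ _ _ _). Qed.

Lemma ceq_cast {A B : Ob K} {f g f' g' : Hom K A B} (p : f = f') (q : g = g') (x : Cell K f g) :
  ceq (ccast K p q x) x.
Proof. destruct p, q. reflexivity. Qed.

Lemma cast_ceq {A B : Ob K} {f g f' g' : Hom K A B} (p : f = f') (q : g = g')
  (x : Cell K f g) (y : Cell K f' g') :
  ceq x y -> ccast K p q x = y.
Proof. intro H. apply ceq_eq, (ceq_trans _ x); [apply ceq_cast | exact H]. Qed.

Lemma is_id_ceq {A B : Ob K} {u v : Hom K A B} (x : Cell K u v) : is_id K x <-> ceq x (id2 K u).
Proof.
  split.
  - intros [q Hq]. rewrite <- Hq. apply ceq_sym, ceq_cast.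
  - intro H. destruct (ceq_ends _ _ H) as [_ q]. exists q. apply cast_ceq. exact H.
Qed.

Lemma ceq_lw {A B : Ob K} {C : Ob K} (h : Hom K B C) {f g f' g' : Hom K A B}
  (x : Cell K f g) (y : Cell K f' g') :
  ceq x y -> ceq (lw K h x) (lw K h y).
Proof.
  intro H. destruct (ceq_ends _ _ H) as [-> ->]. apply ceq_eq in H as ->. reflexivity.
Qed.

Lemma ceq_lw_comp {A B : Ob K} {C D : Ob K} (k : Hom K C D) (h : Hom K B C) {f g : Hom K A B}
  (x : Cell K f g) :
  ceq (lw K k (lw K h x)) (lw K (comp K k h) x).
Proof. rewrite <- (lw_comp K k h x). apply ceq_sym, ceq_cast. Qed.

Lemma ceq_lw_rw {A B : Ob K} {C D : Ob K} (h : Hom K C D) {f g : Hom K B C} (x : Cell K f g)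
  (k : Hom K A B) :
  ceq (lw K h (rw K x k)) (rw K (lw K h x) k).
Proof. rewrite <- (lw_rw K h x k). apply ceq_sym, ceq_cast. Qed.

Lemma ceq_lw_comm {A B : Ob K} {C C' D : Ob K} (h1 : Hom K C D) (k1 : Hom K B C)
  (h2 : Hom K C' D) (k2 : Hom K B C') :
  comp K h1 k1 = comp K h2 k2 ->
  forall {f g : Hom K A B} (x : Cell K f g), ceq (lw K h1 (lw K k1 x)) (lw K h2 (lw K k2 x)).
Proof.
  intros E f g x. apply (ceq_trans _ (lw K (comp K h1 k1) x)); [apply ceq_lw_comp|].
  rewrite E. apply ceq_sym, ceq_lw_comp.
Qed.

Tactic Notation "cstep" uconstr(L) := eapply ceq_trans; [eapply L|].

Section Pullbacks.
Context {A B C P : Ob K} (f : Hom K A C) (g : Hom K B C) (p : Hom K P A) (q : Hom K P B)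
  (sq : comp K f p = comp K g q) (H : is_pullback K f g p q sq).

Lemma pullback_factor {X : Ob K} (a : Hom K X A) (b : Hom K X B) :
  comp K f a = comp K g b -> exists h : Hom K X P, comp K p h = a /\ comp K q h = b.
Proof. intro E. destruct (proj1 (H X) a b E) as [h [Hh _]]. eauto. Qed.

Lemma pullback_hom_ext {X : Ob K} (h h' : Hom K X P) :
  comp K p h = comp K p h' -> comp K q h = comp K q h' -> h = h'.
Proof.
  intros E1 E2.
  destruct (proj1 (H X) _ _ (sq_eq K f g p q sq h)) as [h0 [_ U]].
  transitivity h0; [symmetry|]; apply U; split; congruence.
Qed.

Lemma pullback_cell_factor {X : Ob K} (h h' : Hom K X P)
  (x : Cell K (comp K p h) (comp K p h')) (y : Cell K (comp K q h) (comp K q h')) :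
  ceq (lw K f x) (lw K g y) -> exists z : Cell K h h', lw K p z = x /\ lw K q z = y.
Proof.
  intro E. destruct (proj2 (H X) h h' x y (cast_ceq _ _ _ _ E)) as [z [Hz _]]. eauto.
Qed.

Lemma pullback_cell_ext {X : Ob K} (h h' : Hom K X P) (z z' : Cell K h h') :
  lw K p z = lw K p z' -> lw K q z = lw K q z' -> z = z'.
Proof.
  intros E1 E2.
  destruct (proj2 (H X) h h' _ _ (cast_ceq _ _ _ _ (ceq_lw_comm _ _ _ _ sq z)))
    as [z0 [_ U]].
  transitivity z0; [symmetry|]; apply U; split; congruence.
Qed.

End Pullbacks.

Definition has_pullbacks : Prop :=
  forall (A B C : Ob K) (f : Hom K A C) (g : Hom K B C),
    exists (P : Ob K) (p : Hom K P A) (q : Hom K P B) (sq : comp K f p = comp K g q),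
      is_pullback K f g p q sq.

Definition has_oplifts {E B : Ob K} (p : Hom K E B) : Prop :=
  forall (X : Ob K) (e : Hom K X E) (b : Hom K X B) (v : Cell K (comp K p e) b),
    exists (b' : Hom K X E) (y : Cell K e b'), ceq (lw K p y) v.

Definition unique_oplifts {E B : Ob K} (p : Hom K E B) : Prop :=
  forall (X : Ob K) (e b1 b2 : Hom K X E) (y1 : Cell K e b1) (y2 : Cell K e b2),
    ceq (lw K p y1) (lw K p y2) ->
    existT (fun b => Cell K e b) b1 y1 = existT (fun b => Cell K e b) b2 y2.

Variable T : terminal K.

Lemma is_id_terminal {X : Ob K} {u v : Hom K X (tob K T)} (x : Cell K u v) : is_id K x.
Proof.
  assert (q : v = u) by (rewrite (bang_uniq K T X u), (bang_uniq K T X v); reflexivity).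
  exists q. apply cell_uniq.
Qed.

Lemma bang_comp_eq {X Y : Ob K} (h : Hom K X Y) (a : Hom K X (tob K T)) :
  comp K (bang K T Y) h = a.
Proof. rewrite (bang_uniq K T X a). apply bang_uniq. Qed.

Section DiscreteOpfibrations.
Context {E B : Ob K} (p : Hom K E B).

Lemma dopfib_has_oplifts : is_dopfib K T p -> has_oplifts p.
Proof.
  intros Hp X e b v. destruct (Hp X) as [_ [Hii _]].
  destruct (Hii e b v) as [[b' y] [[[pf Hpf] _] _]]. exists b', y.
  rewrite <- Hpf. apply ceq_sym, ceq_cast.
Qed.

Lemma dopfib_unique_oplifts : is_dopfib K T p -> unique_oplifts p.
Proof.
  intros Hp X e b1 b2 y1 y2 Hc. destruct (Hp X) as [_ [Hii _]].
  destruct (Hii e (comp K p b2) (lw K p y2)) as [w [_ U]].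
  transitivity w; [symmetry|]; apply U; split; try apply is_id_terminal.
  - destruct (ceq_ends _ _ Hc) as [_ Eb]. exists Eb. apply cast_ceq. exact Hc.
  - exists eq_refl. reflexivity.
Qed.

Lemma unique_oplifts_reflect_id : unique_oplifts p ->
  forall (X : Ob K) (a e : Hom K X E) (x : Cell K a e),
    ceq (lw K p x) (id2 K (comp K p a)) ->
    existT (fun a0 => Cell K a0 e) a x = existT (fun a0 => Cell K a0 e) e (id2 K e).
Proof.
  intros Hu X a e x Hx.
  assert (E1 := Hu X a e a x (id2 K a) ltac:(rewrite lw_id2; exact Hx)).
  assert (Ee := f_equal (@projT1 _ _) E1). simpl in Ee. subst e.
  apply inj_pair2 in E1 as ->. reflexivity.
Qed.

Lemma dopfib_intro : has_oplifts p -> unique_oplifts p -> is_dopfib K T p.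
Proof.
  intros Hl Hu X. split; [|split].
  - intros e a u. exists (existT (fun a0 => Cell K a0 e) e (id2 K e)). split.
    + split; simpl.
      * exists (bang_comp_eq e a). apply cell_uniq.
      * apply is_id_ceq. rewrite lw_id2. reflexivity.
    + intros [a' x] [_ Hid]. simpl in Hid. apply is_id_ceq in Hid.
      symmetry. exact (unique_oplifts_reflect_id Hu X a' e x Hid).
  - intros e b v. destruct (Hl X e b v) as [b' [y Hy]].
    destruct (ceq_ends _ _ Hy) as [_ Eb].
    exists (existT _ b' y). split.
    + split; [exists Eb; apply cast_ceq, Hy | apply is_id_terminal].
    + intros [b'' y'] [[Eb' Hy'] _]. apply Hu.
      apply (ceq_trans _ v); [exact Hy|]. rewrite <- Hy'. apply ceq_cast.
  - intros e e' h. exists e', h, (id2 K e').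
    refine (conj _ (conj _ (conj _ (conj _ _)))).
    + exists eq_refl. reflexivity.
    + apply is_id_terminal.
    + exists (bang_comp_eq e' _). apply cell_uniq.
    + apply is_id_ceq. rewrite lw_id2. reflexivity.
    + apply vidl.
Qed.

Lemma induced_mapE {A P P' : Ob K} {g g' : Hom K A B} (c : Hom K P A) (k : Hom K P E)
  (sq : comp K g c = comp K p k) (c' : Hom K P' A) (k' : Hom K P' E)
  (phi : Cell K g g') (m : Hom K P P') :
  induced_map K T p c k sq c' k' phi m <->
  comp K c' m = c /\ exists vb : Cell K k (comp K k' m), ceq (lw K p vb) (rw K phi c).
Proof.
  split.
  - intros [Hm [k'' [vb [e [Hv [_ <-]]]]]]. split; [exact Hm|]. exists vb.
    rewrite <- Hv. apply ceq_sym, ceq_cast.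
  - intros [Hm [vb Hv]]. split; [exact Hm|]. exists (comp K k' m), vb.
    destruct (ceq_ends _ _ Hv) as [_ e]. exists e.
    split; [apply cast_ceq, Hv | split; [apply is_id_terminal | reflexivity]].
Qed.

(* The oplift of [phi c] through [p] lands in [P'] by its universal property. *)
Lemma induced_map_exists {A P P' : Ob K} {g g' : Hom K A B} (c : Hom K P A) (k : Hom K P E)
  (sq : comp K g c = comp K p k) (c' : Hom K P' A) (k' : Hom K P' E)
  (sq' : comp K g' c' = comp K p k') (H' : is_pullback K g' p c' k' sq')
  (phi : Cell K g g') :
  has_oplifts p -> exists m : Hom K P P', induced_map K T p c k sq c' k' phi m.
Proof.
  intro Hl.
  destruct (Hl P k (comp K g' c) (ccast K sq eq_refl (rw K phi c))) as [k2 [y Hy]].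
  assert (Hy' : ceq (lw K p y) (rw K phi c)) by (cstep Hy; apply ceq_cast).
  destruct (ceq_ends _ _ Hy') as [_ Ek2].
  destruct (pullback_factor _ _ _ _ _ H' c k2 (eq_sym Ek2)) as [m [Hm1 <-]].
  exists m. apply induced_mapE. split; [exact Hm1|]. exists y. exact Hy'.
Qed.

End DiscreteOpfibrations.

Section PullbackOfOpfibration.
Context {Om Omb A Ab : Ob K} (tau : Hom K Omb Om) (f : Hom K A Om) (tauf : Hom K Ab A)
  (fb : Hom K Ab Omb) (sq : comp K f tauf = comp K tau fb)
  (Hpb : is_pullback K f tau tauf fb sq).

Lemma pasted_square {X P : Ob K} (g : Hom K X A) (c : Hom K P X) (k : Hom K P Ab) :
  comp K g c = comp K tauf k -> comp K (comp K f g) c = comp K tau (comp K fb k).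
Proof. intro s1. rewrite <- assoc, s1, assoc, sq, <- assoc. reflexivity. Qed.

Lemma pullback_pasting {X P : Ob K} (g : Hom K X A) (c : Hom K P X) (k : Hom K P Ab)
  (s1 : comp K g c = comp K tauf k) (H1 : is_pullback K g tauf c k s1)
  (s2 : comp K (comp K f g) c = comp K tau (comp K fb k)) :
  is_pullback K (comp K f g) tau c (comp K fb k) s2.
Proof.
  intro Y. split.
  - intros a b E. rewrite <- assoc in E.
    destruct (pullback_factor _ _ _ _ _ Hpb _ _ E) as [n [Hn1 Hn2]].
    destruct (pullback_factor _ _ _ _ _ H1 a n (eq_sym Hn1)) as [h [Hh1 Hh2]].
    exists h. split.
    + split; [exact Hh1|]. rewrite <- assoc, Hh2. exact Hn2.
    + intros h' [E1 E2]. apply (pullback_hom_ext _ _ _ _ _ H1); [congruence|].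
      apply (pullback_hom_ext _ _ _ _ _ Hpb).
      * rewrite Hh2, Hn1, assoc, <- s1, <- assoc, E1. reflexivity.
      * rewrite Hh2, Hn2, assoc, E2. reflexivity.
  - intros h h' x y Hc.
    assert (Hc' : ceq (lw K (comp K f g) x) (lw K tau y)).
    { rewrite <- Hc. apply ceq_sym, ceq_cast. }
    set (x1 := ccast K (sq_eq K g tauf c k s1 h) (sq_eq K g tauf c k s1 h') (lw K g x)).
    set (y1 := ccast K (eq_sym (assoc K fb k h)) (eq_sym (assoc K fb k h')) y).
    assert (Hx1 : ceq x1 (lw K g x)) by apply ceq_cast.
    assert (Hy1 : ceq y1 y) by apply ceq_cast.
    destruct (pullback_cell_factor _ _ _ _ _ Hpb _ _ x1 y1) as [z1 [Hz1 Hz2]].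
    { cstep (ceq_lw f _ _ Hx1). cstep ceq_lw_comp. cstep Hc'.
      apply ceq_lw, ceq_sym, Hy1. }
    destruct (pullback_cell_factor _ _ _ _ _ H1 _ _ x z1) as [z [Hz3 Hz4]].
    { rewrite Hz1. apply ceq_sym, Hx1. }
    exists z. split.
    + split; [exact Hz3|]. apply ceq_eq. cstep (ceq_sym _ _ (ceq_lw_comp fb k z)).
      rewrite Hz4, Hz2. exact Hy1.
    + intros z' [E1 E2]. apply (pullback_cell_ext _ _ _ _ _ H1); [congruence|].
      apply (pullback_cell_ext _ _ _ _ _ Hpb).
      * rewrite Hz4, Hz1. apply ceq_eq. cstep Hx1. rewrite <- E1.
        apply ceq_sym, (ceq_lw_comm _ _ _ _ (eq_sym s1)).
      * rewrite Hz4, Hz2. apply ceq_eq. cstep Hy1. rewrite <- E2.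
        apply ceq_sym, ceq_lw_comp.
Qed.

Lemma pullback_has_oplifts : has_oplifts tau -> has_oplifts tauf.
Proof.
  intros Hl X e b v.
  destruct (Hl X (comp K fb e) (comp K f b)
    (ccast K (sq_eq K f tau tauf fb sq e) eq_refl (lw K f v))) as [b2 [y Hy]].
  assert (Hy' : ceq (lw K tau y) (lw K f v)) by (cstep Hy; apply ceq_cast).
  destruct (ceq_ends _ _ Hy') as [_ Eb2].
  destruct (pullback_factor _ _ _ _ _ Hpb b b2 (eq_sym Eb2)) as [b' [<- <-]].
  destruct (pullback_cell_factor _ _ _ _ _ Hpb e b' v y (ceq_sym _ _ Hy'))
    as [z [Hz _]].
  exists b', z. rewrite Hz. reflexivity.
Qed.

Lemma pullback_unique_oplifts : unique_oplifts tau -> unique_oplifts tauf.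
Proof.
  intros Hu X e b1 b2 y1 y2 Hc.
  assert (Hc' : ceq (lw K tau (lw K fb y1)) (lw K tau (lw K fb y2))).
  { cstep (ceq_lw_comm _ _ _ _ (eq_sym sq)). cstep (ceq_lw f _ _ Hc).
    apply ceq_lw_comm, sq. }
  pose proof (Hu X _ _ _ _ _ Hc') as E.
  assert (Eb : b1 = b2).
  { apply (pullback_hom_ext _ _ _ _ _ Hpb).
    - exact (proj2 (ceq_ends _ _ Hc)).
    - exact (f_equal (@projT1 _ _) E). }
  subst b2. apply inj_pair2 in E. f_equal.
  apply (pullback_cell_ext _ _ _ _ _ Hpb); [apply ceq_eq, Hc | exact E].
Qed.

Lemma pullback_is_dopfib : is_dopfib K T tau -> is_dopfib K T tauf.
Proof.
  intro Ht. apply dopfib_intro.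
  - apply pullback_has_oplifts, dopfib_has_oplifts, Ht.
  - apply pullback_unique_oplifts, dopfib_unique_oplifts, Ht.
Qed.

Lemma induced_map_pullback {X P P' : Ob K} (a a' : Hom K X A)
  (c : Hom K P X) (k : Hom K P Ab) (s1 : comp K a c = comp K tauf k)
  (c' : Hom K P' X) (k' : Hom K P' Ab) (s1' : comp K a' c' = comp K tauf k')
  (s2 : comp K (comp K f a) c = comp K tau (comp K fb k))
  (m : Hom K P P') (phi : Cell K a a') :
  induced_map K T tauf c k s1 c' k' phi m <->
  induced_map K T tau c (comp K fb k) s2 c' (comp K fb k') (lw K f phi) m.
Proof.
  split; intro Hind; apply induced_mapE in Hind as [Hm [vb Hv]];
    apply induced_mapE; split; try exact Hm.
  - exists (ccast K eq_refl (assoc K fb k' m) (lw K fb vb)).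
    cstep (ceq_lw tau _ _ (ceq_cast _ _ _)). cstep (ceq_lw_comm _ _ _ _ (eq_sym sq)).
    cstep (ceq_lw f _ _ Hv). apply ceq_lw_rw.
  - assert (E2 : comp K a' c = comp K tauf (comp K k' m)).
    { rewrite <- Hm. exact (sq_eq K _ _ _ _ s1' m). }
    set (x := ccast K s1 E2 (rw K phi c)).
    set (y := ccast K eq_refl (eq_sym (assoc K fb k' m)) vb).
    assert (Hx : ceq x (rw K phi c)) by apply ceq_cast.
    assert (Hy : ceq y vb) by apply ceq_cast.
    destruct (pullback_cell_factor _ _ _ _ _ Hpb k (comp K k' m) x y) as [vb' [Hv' _]].
    { cstep (ceq_lw f _ _ Hx). cstep ceq_lw_rw. cstep (ceq_sym _ _ Hv).
      apply ceq_lw, ceq_sym, Hy. }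
    exists vb'. rewrite Hv'. exact Hx.
Qed.

Lemma fully_faithful_classifying_pullback :
  classifying K T tau -> fully_faithful K f -> classifying K T tauf.
Proof.
  intros Hcl Hff X g g' P c k s1 H1 P' c' k' s1' H1' m Hbang Hm.
  pose (s2 := pasted_square g c k s1). pose (s2' := pasted_square g' c' k' s1').
  destruct (Hcl X _ _ P c _ s2 (pullback_pasting g c k s1 H1 s2)
                  P' c' _ s2' (pullback_pasting g' c' k' s1' H1' s2') m Hbang Hm)
    as [psi [Hpsi Upsi]].
  destruct (Hff X g g' psi) as [phi [Hphi Uphi]].
  exists phi. split.
  - apply (induced_map_pullback g g' c k s1 c' k' s1' s2). rewrite Hphi. exact Hpsi.
  - intros phi' Hphi'. apply Uphi. symmetry. apply Upsi.
    apply (induced_map_pullback g g' c k s1 c' k' s1' s2). exact Hphi'.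
Qed.

Lemma classifying_pullback_fully_faithful : has_pullbacks -> has_oplifts tau ->
  classifying K T tau -> classifying K T tauf -> fully_faithful K f.
Proof.
  intros Hpbs Hl Hcl Hclf X a a' b.
  destruct (Hpbs _ _ _ a tauf) as [P [c [k [s1 H1]]]].
  destruct (Hpbs _ _ _ a' tauf) as [P' [c' [k' [s1' H1']]]].
  pose (s2 := pasted_square a c k s1). pose (s2' := pasted_square a' c' k' s1').
  pose proof (pullback_pasting a' c' k' s1' H1' s2') as H2'.
  destruct (induced_map_exists tau c _ s2 c' _ s2' H2' b Hl) as [m Hb].
  assert (Hbang : comp K (bang K T P') m = bang K T P) by apply bang_uniq.
  destruct (Hclf X a a' P c k s1 H1 P' c' k' s1' H1' m Hbang (proj1 Hb))
    as [phi [Hphi Uphi]].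
  destruct (Hcl X _ _ P c _ s2 (pullback_pasting a c k s1 H1 s2)
                  P' c' _ s2' H2' m Hbang (proj1 Hb)) as [psi [_ Upsi]].
  exists phi. split.
  - transitivity psi; [symmetry|]; apply Upsi; [|exact Hb].
    apply (induced_map_pullback a a' c k s1 c' k' s1' s2). exact Hphi.
  - intros x Hx. apply Uphi.
    apply (induced_map_pullback a a' c k s1 c' k' s1' s2). rewrite Hx. exact Hb.
Qed.

End PullbackOfOpfibration.
End TwoCategory.

Theorem proposition4p4 (K : TwoCat) (HK : finitely_complete K) (T : terminal K)
  (Om Omb : Ob K) (tau : Hom K Omb Om) (Htau : classifying_dopfib K T tau)
  (A : Ob K) (f : Hom K A Om)
  (Ab : Ob K) (tauf : Hom K Ab A) (fb : Hom K Ab Omb)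
  (sq : comp K f tauf = comp K tau fb) (Hpb : is_pullback K f tau tauf fb sq) :
  classifying_dopfib K T tauf <-> fully_faithful K f.
Proof.
  destruct Htau as [Hdop Hcl]. destruct HK as [_ [Hpbs _]].
  split.
  - intros [_ Hclf].
    exact (classifying_pullback_fully_faithful K T tau f tauf fb sq Hpb Hpbs
             (dopfib_has_oplifts K T tau Hdop) Hcl Hclf).
  - intro Hff. split.
    + exact (pullback_is_dopfib K T tau f tauf fb sq Hpb Hdop).
    + exact (fully_faithful_classifying_pullback K T tau f tauf fb sq Hpb Hcl Hff).
Qed.
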